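(* Let $C$ be a norm-closed convex bounded subset of $L_1([0,1])$ and let $\tau$ be the topology of convergence in measure on $L_1([0,1])$. Then $H(C,\overline{C}^\tau)\le \operatorname{diam}(C)/2$. Moreover, if $H(C,\overline{C}^\tau)=\operatorname{diam}(C)/2$, then $t(C)=2$.
   Context: $\overline{C}^\tau$ denotes the closure of $C$ in the topology $\tau$ of convergence in measure (Lebesgue measure on $[0,1]$), and $H(A,B)$ denotes the Hausdorff distance (with respect to the $L_1$ norm) between sets $A$ and $B$. The coefficient $t(C)$ is defined by $$t(C)=\inf\Big\{\lambda\ge 0:\ \inf_{c\in C}\limsup_n\|c-x_n\|\le \lambda\limsup_n\|x-x_n\| \text{ for all sequences }(x_n)\subset C \text{ and all } x\in L_1([0,1]) \text{ with } x_n\to x \text{ in } \tau\Big\}.$$ *)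

(* L_1([0,1]) is modelled by functions R -> R that are
   Lebesgue integrable on `[0,1]; the L_1 (semi)norm distance is computed on
   `[0,1]. Sets of such functions play the role of subsets of L_1. *)
From HB Require Import structures.
From mathcomp Require Import all_boot all_order all_algebra.
From mathcomp Require Import all_classical all_reals all_analysis.
Set Implicit Arguments. Unset Strict Implicit. Unset Printing Implicit Defensive.
Import Order.TTheory GRing.Theory Num.Theory.
Local Open Scope classical_set_scope.
Local Open Scope ring_scope.

Section L1defs.
Variable R : realType.

Definition unit_itv : set R := `[0%R, 1%R].

Definition isL1 (x : R -> R) : Prop :=
  (@lebesgue_measure R).-integrable unit_itv (EFin \o x).

Definition L1dist (f g : R -> R) : \bar R :=
  (\int[@lebesgue_measure R]_(t in unit_itv) (`|f t - g t|)%:E)%E.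

Definition cvg_in_measure (u : nat -> R -> R) (x : R -> R) : Prop :=
  forall eps : R, 0 < eps ->
    (fun n => @lebesgue_measure R (unit_itv `&` [set t | eps < `|u n t - x t|]))
      @ \oo --> 0%E.

(* closure of C in the topology tau of convergence in measure on L_1([0,1])
   (tau is metrizable, so the closure is the sequential closure) *)
Definition tau_closure (C : set (R -> R)) : set (R -> R) :=
  [set x | isL1 x /\ exists u : nat -> R -> R,
             (forall n, C (u n)) /\ cvg_in_measure u x].

Definition norm_closed (C : set (R -> R)) : Prop :=
  forall (u : nat -> R -> R) (x : R -> R), (forall n, C (u n)) -> isL1 x ->
    (fun n => L1dist (u n) x) @ \oo --> 0%E -> C x.

Definition convexC (C : set (R -> R)) : Prop :=
  forall a b : R -> R, C a -> C b -> forall l : R, 0 <= l <= 1 ->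
    C (fun t => l * a t + (1 - l) * b t).

Definition L1bounded (C : set (R -> R)) : Prop :=
  exists M : R, forall c, C c -> (L1dist c (fun _ => 0%R) <= M%:E)%E.

Definition setdist (x : R -> R) (A : set (R -> R)) : \bar R :=
  ereal_inf [set L1dist x a | a in A].

Definition hausdorff (A B : set (R -> R)) : \bar R :=
  maxe (ereal_sup [set setdist a B | a in A])
       (ereal_sup [set setdist b A | b in B]).

Definition diam (C : set (R -> R)) : \bar R :=
  ereal_sup [set d | exists a b, C a /\ C b /\ d = L1dist a b].

Definition t_admissible (C : set (R -> R)) (l : R) : Prop :=
  0 <= l /\
  forall (u : nat -> R -> R) (x : R -> R),
    (forall n, C (u n)) -> isL1 x -> cvg_in_measure u x ->
    (ereal_inf [set limn_esup (fun n => L1dist c (u n)) | c in C]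
       <= l%:E * limn_esup (fun n => L1dist x (u n)))%E.

Definition t_coef (C : set (R -> R)) : \bar R :=
  ereal_inf [set l%:E | l in t_admissible C].

End L1defs.

(* If u_n -> x in measure, distances to u_n split asymptotically: for every c,
   ||c - u_n|| >= ||c - x|| + ||x - u_n|| - o(1).  Pointwise
   |a| + |b| <= |a - b| + 2 min(|a|, |b|) with a = c - x, b = u_n - x, and
   the integral of min(|c - x|, |u_n - x|) tends to 0 since c - x is
   integrable while u_n - x -> 0 in measure.
   Let x be the tau-limit of u_n in C, d = dist(x, C), L = limsup ||x - u_n||.
   Splitting with c = u_0 gives d + L <= diam C, and d <= L, so d <= diam C / 2.
   The triangle inequality shows that 2 is always admissible for t(C).  If l is
   admissible, splitting with every c in C gives d + L <= l L, hence
   l d <= (l - 1) diam C; when d can be taken arbitrarily close to diam C / 2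
   this forces l >= 2. *)

From mathcomp Require Import all_boot all_order all_algebra.
From mathcomp Require Import all_classical all_reals all_analysis.
From mathcomp Require Import measurable_realfun ring lra.
Import Order.TTheory GRing.Theory Num.Theory.
Local Open Scope classical_set_scope.
Local Open Scope ring_scope.

Section norm_inequalities.
Context {R : realDomainType}.

Lemma minr_norm_le (a b e M : R) : 0 <= e -> 0 <= M ->
  Num.min `|a| `|b| <= e + (if e < `|b| then M else 0) + Num.max (`|a| - M) 0.
Proof.
move=> e0 M0; have tail_ge : `|a| - M <= Num.max (`|a| - M) 0 by rewrite le_max lexx.
have tail_ge0 : 0 <= Num.max (`|a| - M) 0 by rewrite le_max lexx orbT.
case: ifPn => [_|]; last rewrite -leNgt => be.
  by rewrite ge_min; apply/orP; left; lra.
by rewrite ge_min; apply/orP; right; lra.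
Qed.

Lemma ler_normD_min (a b : R) :
  `|a| + `|b| <= `|a - b| + (Num.min `|a| `|b| + Num.min `|a| `|b|).
Proof.
wlog ab : a b / `|a| <= `|b|.
  move=> wlog_ab; case/orP: (le_total `|a| `|b|) => [/wlog_ab //|ba].
  by rewrite addrC distrC minC; exact: wlog_ab.
have := ler_normD (b - a) a; rewrite subrK distrC (min_idPl ab); lra.
Qed.

End norm_inequalities.

Section extended_real_sequences.
Local Open Scope ereal_scope.
Context {R : realType}.
Implicit Types (u v : (\bar R)^nat) (a M : \bar R).

Lemma limn_esup_le_near u M : (\forall n \near \oo, u n <= M) -> limn_esup u <= M.
Proof.
move=> uM; apply: (@le_trans _ _ (ereal_sup (u @` [set n | u n <= M]))).
  by apply: ereal_inf_lbound; exists [set n | u n <= M].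
by apply: ge_ereal_sup => _ [n /= uMn <-].
Qed.

Lemma limn_esup_lt_near u M : limn_esup u < M -> \forall n \near \oo, u n < M.
Proof.
move=> /ereal_inf_lt[_ [V oV <-]] VM; apply: filterS oV => n Vn.
by apply: le_lt_trans VM; apply: ereal_sup_ubound; exists n.
Qed.

Lemma le_limn_esup_near u v :
  (\forall n \near \oo, u n <= v n) -> limn_esup u <= limn_esup v.
Proof.
move=> uv; apply: le_ereal_inf_tmp => _ [V oV <-].
apply: (@le_trans _ _ (ereal_sup (u @` (V `&` [set n | u n <= v n])))).
  by apply: ereal_inf_lbound; exists (V `&` [set n | u n <= v n]) => //; exact: filterI.
apply: ge_ereal_sup => _ [n [Vn uvn] <-]; apply: le_trans uvn _.
by apply: ereal_sup_ubound; exists n.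
Qed.

Lemma limn_esup_cst a : limn_esup (fun=> a) = a.
Proof. by rewrite is_cvg_limn_esupE; [exact: lim_cst | exact: is_cvg_cst]. Qed.

Lemma limn_esup_ge_near u a : (\forall n \near \oo, a <= u n) -> a <= limn_esup u.
Proof. by move=> au; rewrite -[leLHS]limn_esup_cst; exact: le_limn_esup_near. Qed.

Lemma limn_esupDl u a : a \is a fin_num ->
  limn_esup (fun n => a + u n) = a + limn_esup u.
Proof.
move=> afin; rewrite -[LHS]oppeK -limn_einfN.
have -> : -%E \o (fun n => a + u n) = (fun n => - a + (-%E \o u) n).
  by apply: funext => n /=; rewrite oppeD ?fin_num_adde_defr.
rewrite limn_einf_shift ?fin_numN // oppeD ?fin_num_adde_defr ?fin_numN //.
by rewrite oppeK limn_einfN oppeK.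
Qed.

Lemma double_lee_half (d a : \bar R) :
  d \is a fin_num -> d + d <= a -> d <= a * 2^-1%:E.
Proof.
move=> /fineK <-; case: a => [r | | ] //=.
- by rewrite -EFinD -EFinM !lee_fin => h; lra.
- by move=> _; rewrite mulyr gtr0_sg ?invr_gt0 // mul1e leey.
Qed.

Lemma cvge_lt_near {u} {l M : R} :
  u @ \oo --> l%:E -> (l < M)%R -> \forall n \near \oo, u n < M%:E.
Proof.
move=> /fine_cvgP[u_fin u_l] lM; near=> n.
have un_fin : u n \is a fin_num by near: n.
rewrite -(fineK un_fin) lte_fin; near: n; exact: cvgr_lt u_l _ lM.
Unshelve. all: by end_near.
Qed.

End extended_real_sequences.

Section L1dist.
Context {R : realType}.
Local Notation mu := (@lebesgue_measure R).
Local Notation D := (@unit_itv R).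
Implicit Types (f g h x a c : R -> R) (A : set (R -> R)).

Lemma measurable_unit_itv : measurable (D : set (measurableTypeR R)).
Proof. exact: measurable_itv. Qed.

Lemma lebesgue_measure_unit_itv : mu D = 1%E.
Proof. by rewrite /unit_itv lebesgue_measure_itv /= lte_fin ltr01 sube0. Qed.

Lemma isL1_measurable {f} : isL1 f -> measurable_fun D f.
Proof. by move=> /integrableP[/measurable_EFinP]. Qed.

Lemma isL1B {f g} : isL1 f -> isL1 g -> isL1 (fun t => f t - g t).
Proof.
move=> if_ ig.
have mD := measurable_unit_itv.
exact: (eq_integrable mD _ _ _ (integrableB mD if_ ig)).
Qed.

Lemma measurable_normB {f g} : measurable_fun D f -> measurable_fun D g ->
  measurable_fun D (fun t => `|f t - g t|).
Proof. by move=> mf mg; apply: measurableT_comp => //; exact: measurable_funB. Qed.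

Lemma ge0_integralD_EFin {f g} : measurable_fun D f -> measurable_fun D g ->
  (forall t, D t -> 0 <= f t) -> (forall t, D t -> 0 <= g t) ->
  (\int[mu]_(t in D) (f t + g t)%:E =
   \int[mu]_(t in D) (f t)%:E + \int[mu]_(t in D) (g t)%:E)%E.
Proof.
move=> mf mg f0 g0; under eq_integral do rewrite EFinD.
apply: ge0_integralD; first exact: measurable_unit_itv.
- by move=> t Dt; rewrite lee_fin f0.
- exact/measurable_EFinP.
- by move=> t Dt; rewrite lee_fin g0.
- exact/measurable_EFinP.
Qed.

Lemma ge0_le_integral_EFin f g : measurable_fun D f -> measurable_fun D g ->
  (forall t, D t -> 0 <= f t) -> (forall t, D t -> f t <= g t) ->
  (\int[mu]_(t in D) (f t)%:E <= \int[mu]_(t in D) (g t)%:E)%E.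
Proof.
move=> mf mg f0 fg; apply: ge0_le_integral; first exact: measurable_unit_itv.
- by move=> t Dt; rewrite lee_fin f0.
- exact/measurable_EFinP.
- exact/measurable_EFinP.
- by move=> t Dt; rewrite lee_fin fg.
Qed.

Lemma measurable_tail {g} (M : R) : measurable_fun D g ->
  measurable_fun D (fun t => Num.max (`|g t| - M) 0).
Proof.
move=> mg; apply: measurable_maxr => //.
by apply: measurable_funB => //; exact: measurableT_comp.
Qed.

Local Open Scope ereal_scope.

Lemma L1dist_ge0 f g : 0 <= L1dist f g.
Proof. by apply: integral_ge0 => t _; rewrite lee_fin. Qed.

Lemma L1distC f g : L1dist f g = L1dist g f.
Proof. by apply: eq_integral => t _; rewrite distrC. Qed.

Lemma L1distxx f : L1dist f f = 0.
Proof.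
rewrite /L1dist (eq_integral (fun=> 0)) ?integral0 // => t _.
by rewrite subrr normr0.
Qed.

Lemma L1dist_fin_num {f g} : isL1 f -> isL1 g -> L1dist f g \is a fin_num.
Proof.
move=> if_ ig; rewrite ge0_fin_numE ?L1dist_ge0 //.
by case/integrableP: (isL1B if_ ig) => _; apply: le_lt_trans; rewrite le_eqVlt eqxx.
Qed.

Lemma L1dist_triangle {f g h} : measurable_fun D f -> measurable_fun D g ->
  measurable_fun D h -> L1dist f h <= L1dist f g + L1dist g h.
Proof.
move=> mf mg mh; have mfg := measurable_normB mf mg.
have mgh := measurable_normB mg mh.
rewrite /L1dist -(ge0_integralD_EFin mfg mgh); [|by move=> ? _ ..].
apply: ge0_le_integral_EFin => //; first exact: measurable_normB.
  exact: measurable_funD.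
by move=> t _; rewrite (le_trans _ (ler_normD _ _)) // addrA subrK.
Qed.

Lemma isL1_tail_le {g} {eta : R} : isL1 g -> (0 < eta)%R ->
  exists2 M : R, (0 <= M)%R &
    \int[mu]_(t in D) (Num.max (`|g t| - M) 0)%:E <= eta%:E.
Proof.
move=> ig eta0; have mg := isL1_measurable ig.
pose tail n t := (Num.max (`|g t| - n%:R) 0)%:E.
have mtail n : measurable_fun D (tail n).
  by apply/measurable_EFinP; exact: measurable_tail.
have tail0 t : D t -> tail ^~ t @ \oo --> (cst 0 t).
  move=> _; apply: cvg_near_cst; near=> n; congr (_%:E); apply/max_idPr.
  rewrite subr_le0 ltW // (lt_le_trans (truncnS_gt _)) // ler_nat.
  by near: n; exists (Num.truncn `|g t|).+1.
have ig_abs : mu.-integrable D (fun t => (`|g t|)%:E).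
  exact: (eq_integrable measurable_unit_itv _ _ _ (integrable_abse ig)).
have tail_le n t : D t -> `|tail n t| <= (`|g t|)%:E.
  move=> _; rewrite /tail /= lee_fin ger0_norm ?le_max ?lexx ?orbT //.
  by rewrite ge_max normr_ge0 andbT lerBlDr lerDl.
have fin_g t : D t -> (`|g t|)%:E \is a fin_num by [].
have := dominated_cvg measurable_unit_itv mtail tail0 fin_g ig_abs tail_le.
rewrite integral_cst ?mul0e; last exact: measurable_unit_itv.
move=> /cvge_lt_near/(_ eta0)[N _ tailN].
by exists N%:R => //; exact: ltW (tailN N (leqnn N)).
Unshelve. all: by end_near.
Qed.

Lemma measurable_normr_gt h (e : R) : measurable_fun D h ->
  measurable (D `&` [set t | (e < `|h t|)%R]).
Proof.
move=> mh; have -> : [set t | (e < `|h t|)%R] = (fun t => `|h t|%R) @^-1` `]e, +oo[.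
  by apply/seteqP; split => t /=; rewrite in_itv /= andbT.
by apply: (measurableT_comp _ mh) => //; exact: measurable_itv.
Qed.

Lemma integral_minr_norm_le {g h} {e M : R} :
  measurable_fun D g -> measurable_fun D h -> (0 <= e)%R -> (0 <= M)%R ->
  \int[mu]_(t in D) (Num.min `|g t| `|h t|)%R%:E <=
  e%:E + M%:E * mu (D `&` [set t | (e < `|h t|)%R]) +
  \int[mu]_(t in D) (Num.max (`|g t| - M) 0)%R%:E.
Proof.
move=> mg mh e0 M0; set A := D `&` _.
have mA : measurable A by exact: measurable_normr_gt.
have mtail := measurable_tail M mg.
have mMA : measurable_fun D (fun t => M * \1_A t)%R.
  by apply: measurable_funM => //; exact: measurable_indic.
have MA0 t : D t -> (0 <= M * \1_A t)%R by move=> _; rewrite mulr_ge0.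
apply: (@le_trans _ _
  (\int[mu]_(t in D) (e + M * \1_A t + Num.max (`|g t| - M) 0)%R%:E)).
  apply: ge0_le_integral_EFin.
  - by apply: measurable_minr; exact: measurableT_comp.
  - by apply: measurable_funD => //; exact: measurable_funD.
  - by move=> t _; rewrite le_min !normr_ge0.
  move=> t Dt; apply: le_trans (minr_norm_le (g t) (h t) e M e0 M0) _.
  rewrite indicE; case: ifPn => eh.
    by rewrite mem_set ?mulr1 //; split.
  by rewrite memNset ?mulr0 // => -[_]; apply/negP.
have me : measurable_fun D (fun=> e) by exact: measurable_cst.
rewrite (ge0_integralD_EFin (measurable_funD me mMA) mtail);
  [|by move=> t Dt; rewrite addr_ge0 ?MA0|by move=> t _; rewrite le_max lexx orbT].
rewrite (ge0_integralD_EFin me mMA) //.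
rewrite integral_cst; last exact: measurable_unit_itv.
(* [mu D] occurs here at a convertible but syntactically different type. *)
rewrite [X in e%:E * X](_ : _ = 1) ?mule1; last exact: lebesgue_measure_unit_itv.
under eq_integral do rewrite EFinM.
rewrite ge0_integralZl_EFin //; last 2 first.
- exact: measurable_unit_itv.
- by apply/measurable_EFinP; exact: measurable_indic.
rewrite integral_indic; [|exact: measurable_unit_itv|exact: mA].
by rewrite setIAC setIid.
Qed.

Lemma integral_minr_near {g} {h : nat -> R -> R} : isL1 g ->
  (forall n, measurable_fun D (h n)) ->
  (forall e : R, (0 < e)%R ->
    (fun n => mu (D `&` [set t | (e < `|h n t|)%R])) @ \oo --> 0) ->
  forall eta : R, (0 < eta)%R ->
  \forall n \near \oo, \int[mu]_(t in D) (Num.min `|g t| `|h n t|)%R%:E <= eta%:E.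
Proof.
(* [eta / 3] each for the level, the tail of [g] above [M], and [M] times the
   measure of the set where [h n] exceeds the level. *)
move=> ig mh h0 eta eta0; have eta30 : (0 < eta / 3)%R by rewrite divr_gt0.
have [M M0 tailM] := isL1_tail_le ig eta30.
have c0 : (0 < eta / 3 / (M + 1))%R by rewrite divr_gt0 // ltr_wpDl.
have := cvge_lt_near (h0 _ eta30) c0; apply: filterS => n hn.
apply: le_trans (integral_minr_norm_le (isL1_measurable ig) (mh n) (ltW eta30) M0) _.
move: hn; set m := mu _ => hn.
have m_fin : m \is a fin_num.
  by rewrite ge0_fin_numE ?measure_ge0 // (lt_trans hn) ?ltry.
have Mm : (M * fine m <= eta / 3)%R.
  have hn' : (fine m < eta / 3 / (M + 1))%R by rewrite -lte_fin fineK.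
  apply: (@le_trans _ _ ((M + 1) * (eta / 3 / (M + 1))))%R.
    by rewrite ler_pM ?fine_ge0 ?measure_ge0 ?lerDl // ltW.
  by rewrite mulrC divfK // gt_eqF // ltr_wpDl.
rewrite -(fineK m_fin) -EFinM.
apply: (@le_trans _ _ ((eta / 3 + eta / 3)%:E + (eta / 3)%:E)).
  by apply: leeD => //; rewrite EFinD leeD2l // lee_fin.
by rewrite -EFinD lee_fin; lra.
Qed.

Lemma L1dist_split_near {c x} {u : nat -> R -> R} : isL1 c -> isL1 x ->
  (forall n, isL1 (u n)) -> cvg_in_measure u x ->
  forall delta : R, (0 < delta)%R ->
  \forall n \near \oo, L1dist c x + L1dist x (u n) <= L1dist c (u n) + delta%:E.
Proof.
move=> ic ix iu ux delta delta0.
have mc := isL1_measurable ic; have mx := isL1_measurable ix.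
have mun n := isL1_measurable (iu n).
have mh n : measurable_fun D (fun t => u n t - x t)%R by exact: measurable_funB.
have delta20 : (0 < delta / 2)%R by rewrite divr_gt0.
have := integral_minr_near (isL1B ic ix) mh ux _ delta20; apply: filterS => n min_small.
pose m t := Num.min `|c t - x t|%R `|u n t - x t|%R.
have mm : measurable_fun D m by apply: measurable_minr; exact: measurable_normB.
have m0 t : D t -> (0 <= m t)%R by move=> _; rewrite le_min !normr_ge0.
have mcx := measurable_normB mc mx; have mxu := measurable_normB mx (mun n).
rewrite /L1dist -(ge0_integralD_EFin mcx mxu); [|by move=> ? _ ..].
apply: (@le_trans _ _ (\int[mu]_(t in D) (`|c t - u n t| + (m t + m t))%R%:E)).
  apply: ge0_le_integral_EFin.
  - by apply: measurable_funD; exact: measurable_normB.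
  - by apply: measurable_funD; [exact: measurable_normB | exact: measurable_funD].
  - by move=> t _; rewrite addr_ge0.
  move=> t _; rewrite (distrC (x t)).
  have -> : (c t - u n t = (c t - x t) - (u n t - x t))%R by ring.
  exact: ler_normD_min.
have mcu := measurable_normB mc (mun n).
rewrite (ge0_integralD_EFin mcu (measurable_funD mm mm));
  [|by move=> ? _|by move=> t Dt; rewrite addr_ge0 ?m0].
rewrite (ge0_integralD_EFin mm mm) // leeD2l // (splitr delta) EFinD.
by apply: leeD.
Qed.

Lemma L1dist_split_limn_esup {c x} {u : nat -> R -> R} : isL1 c -> isL1 x ->
  (forall n, isL1 (u n)) -> cvg_in_measure u x ->
  L1dist c x + limn_esup (fun n => L1dist x (u n)) <=
  limn_esup (fun n => L1dist c (u n)).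
Proof.
move=> ic ix iu ux; apply/lee_addgt0Pr => e e0.
rewrite -limn_esupDl ?L1dist_fin_num // addeC -limn_esupDl //.
apply: le_limn_esup_near.
have := L1dist_split_near ic ix iu ux _ e0.
by apply: filterS => n; rewrite [e%:E + _]addeC.
Qed.

Lemma setdist_ge0 x A : 0 <= setdist x A.
Proof. by apply: le_ereal_inf_tmp => _ [a _ <-]; exact: L1dist_ge0. Qed.

Lemma setdist_le {x A a} : A a -> setdist x A <= L1dist x a.
Proof. by move=> Aa; apply: ereal_inf_lbound; exists a. Qed.

Lemma setdist_mem a A : A a -> setdist a A = 0.
Proof.
move=> Aa; apply/eqP; rewrite eq_le setdist_ge0 andbT.
by rewrite -(L1distxx a); exact: setdist_le.
Qed.

Lemma setdist_fin_num {x A a} : A a -> isL1 x -> isL1 a -> setdist x A \is a fin_num.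
Proof.
move=> Aa ix ia; rewrite ge0_fin_numE ?setdist_ge0 //.
by apply: le_lt_trans (setdist_le Aa) _; rewrite ltey_eq L1dist_fin_num.
Qed.

Lemma setdist_le_limn_esup x A (u : nat -> R -> R) : (forall n, A (u n)) ->
  setdist x A <= limn_esup (fun n => L1dist x (u n)).
Proof.
by move=> Au; apply: limn_esup_ge_near; apply: nearW => n; exact: setdist_le.
Qed.

Lemma L1dist_le_diam A a b : A a -> A b -> L1dist a b <= diam A.
Proof. by move=> Aa Ab; apply: ereal_sup_ubound; exists a, b. Qed.

End L1dist.

Section tau_closure.
Context {R : realType}.
Variable C : set (R -> R).
Hypothesis C_L1 : forall c, C c -> isL1 c.
Local Open Scope ereal_scope.

Lemma tau_closure_sub : C `<=` tau_closure C.
Proof.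
move=> c Cc; split; first exact: C_L1.
exists (fun=> c); split => // e e0; apply: cvg_near_cst; apply: nearW => n.
rewrite (_ : _ `&` _ = set0) ?measure0 //; apply/seteqP; split => t //= [_].
by rewrite subrr normr0 ltNge (ltW e0).
Qed.

Lemma setdist_tau_closure_mem a : C a -> setdist a (tau_closure C) = 0.
Proof. by move=> Ca; apply: setdist_mem; exact: tau_closure_sub. Qed.

Lemma setdist_add_limn_esup_le_diam {x} {u : nat -> R -> R} :
  (forall n, C (u n)) -> isL1 x -> cvg_in_measure u x ->
  setdist x C + limn_esup (fun n => L1dist x (u n)) <= diam C.
Proof.
move=> uC ix ux; have iu n := C_L1 _ (uC n).
apply: (@le_trans _ _ (L1dist (u 0%N) x + limn_esup (fun n => L1dist x (u n)))).
  by rewrite leeD2r // L1distC; exact: setdist_le.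
apply: le_trans (L1dist_split_limn_esup (iu 0%N) ix iu ux) _.
by apply: limn_esup_le_near; apply: nearW => n; exact: L1dist_le_diam.
Qed.

Lemma setdist_tau_closure_le x : tau_closure C x -> setdist x C <= diam C * 2^-1%:E.
Proof.
move=> [ix [u [uC ux]]]; apply: double_lee_half.
  exact: setdist_fin_num (uC 0%N) ix (C_L1 _ (uC 0%N)).
apply: le_trans (setdist_add_limn_esup_le_diam uC ix ux).
by apply: leeD2l; exact: setdist_le_limn_esup.
Qed.

Lemma hausdorff_tau_closure_le : hausdorff C (tau_closure C) <= diam C * 2^-1%:E.
Proof.
rewrite /hausdorff ge_max; apply/andP; split; apply: ge_ereal_sup => _ [a Ca <-].
  rewrite setdist_tau_closure_mem //.
  by apply: mule_ge0 => //; rewrite -(L1distxx a); exact: L1dist_le_diam.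
exact: setdist_tau_closure_le.
Qed.

Lemma t_admissible2 : t_admissible C 2.
Proof.
split => // u x uC ix ux; have iu n := C_L1 _ (uC n).
have : 0 <= limn_esup (fun n => L1dist x (u n)).
  by apply: limn_esup_ge_near; apply: nearW => n; exact: L1dist_ge0.
case L_eq : limn_esup => [r | | ] // r0; last by rewrite mulry gtr0_sg // mul1e leey.
apply/lee_addgt0Pr => e e0.
have [N _ uN] : \forall n \near \oo, L1dist x (u n) < (r + e)%:E.
  by apply: limn_esup_lt_near; rewrite L_eq lte_fin ltrDl.
apply: (@le_trans _ _ (limn_esup (fun n => L1dist (u N) (u n)))).
  by apply: ereal_inf_lbound; exists (u N).
apply: (@le_trans _ _ (L1dist (u N) x + r%:E)).
  rewrite -L_eq -limn_esupDl ?L1dist_fin_num //.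
  apply: le_limn_esup_near; apply: nearW => n.
  by apply: L1dist_triangle; exact: isL1_measurable.
rewrite L1distC; apply: (@le_trans _ _ ((r + e)%:E + r%:E)).
  exact: leeD2r (ltW (uN N (leqnn N))).
by rewrite -!EFinD lee_fin; lra.
Qed.

Lemma t_admissible_setdist_le {l x} {Dr : R} : t_admissible C l -> tau_closure C x ->
  diam C = Dr%:E -> 0 < setdist x C -> (l * fine (setdist x C) <= (l - 1) * Dr)%R.
Proof.
move=> [l0 adm] [ix [u [uC ux]]] CDr d0; have iu n := C_L1 _ (uC n).
set d := setdist x C in d0 *; set L := limn_esup (fun n => L1dist x (u n)).
have dL : d <= L by exact: setdist_le_limn_esup.
have dLD : d + L <= Dr%:E by rewrite -CDr; exact: setdist_add_limn_esup_le_diam.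
have dLl : d + L <= l%:E * L.
  apply: le_trans (adm u x uC ix ux); apply: le_ereal_inf_tmp => _ [c Cc <-].
  apply: le_trans (L1dist_split_limn_esup (C_L1 _ Cc) ix iu ux); apply: leeD2r.
  by rewrite L1distC; exact: setdist_le.
have d_fin : d \is a fin_num := setdist_fin_num (uC 0%N) ix (iu 0%N).
have L_fin : L \is a fin_num.
  rewrite fin_numElt (lt_le_trans _ (le_trans (setdist_ge0 _ _) dL)) ?ltNy0 //=.
  by rewrite (le_lt_trans (le_trans (leeDr _ (setdist_ge0 x C)) dLD)) ?ltry.
move: d0 dL dLD dLl.
rewrite -(fineK d_fin) -(fineK L_fin) -EFinD -EFinM !lee_fin lte_fin.
move=> d0 dL dLD dLl; have l1 : (1 < l)%R by nra.
nra.
Qed.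

Lemma tau_closure_setdist_gt {Dr eps : R} : (0 < Dr)%R -> diam C = Dr%:E ->
  hausdorff C (tau_closure C) = diam C * 2^-1%:E -> (0 < eps)%R ->
  exists2 x, tau_closure C x & (Dr / 2 - eps)%:E < setdist x C.
Proof.
move=> Dr0 CDr H_half eps0.
have : (Dr / 2)%:E <= hausdorff C (tau_closure C) by rewrite H_half CDr -EFinM.
rewrite /hausdorff le_max => /orP[C_half|].
  have : ereal_sup [set setdist a (tau_closure C) | a in C] <= 0.
    by apply: ge_ereal_sup => _ [a Ca <-]; rewrite setdist_tau_closure_mem.
  by move=> /(le_trans C_half); rewrite lee_fin leNgt divr_gt0.
move=> /(lt_le_trans _) => /(_ (Dr / 2 - eps)%:E).
rewrite lte_fin ltrBlDr ltrDl => /(_ eps0)/ereal_sup_gt[_ [x clx <-] dx].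
by exists x.
Qed.

Lemma t_admissible_ge2 {l Dr : R} : (0 < Dr)%R -> diam C = Dr%:E ->
  hausdorff C (tau_closure C) = diam C * 2^-1%:E -> t_admissible C l -> (2 <= l)%R.
Proof.
move=> Dr0 CDr H_half adm; have l0 := adm.1.
rewrite leNgt; apply/negP => l2.
(* For [l < 2] this [eps] makes [l * (Dr / 2 - eps)] exceed [(l - 1) * Dr]. *)
pose eps := (Dr * (2 - l) / 8)%R.
have eps0 : (0 < eps)%R by rewrite divr_gt0 // mulr_gt0 // subr_gt0.
have [x clx dx] := tau_closure_setdist_gt Dr0 CDr H_half eps0.
have d_fin : setdist x C \is a fin_num.
  by case: clx => ix [u [uC _]]; exact: setdist_fin_num (uC 0%N) ix (C_L1 _ (uC 0%N)).
move: dx; rewrite -(fineK d_fin) lte_fin => dx.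
have d0 : 0 < setdist x C by rewrite -(fineK d_fin) lte_fin; rewrite /eps in dx; nra.
have := t_admissible_setdist_le adm clx CDr d0.
have : (0 < Dr * ((2 - l) * (4 - l)))%R by rewrite !mulr_gt0 // subr_gt0 //; lra.
rewrite /eps in dx; nra.
Qed.

Lemma L1bounded_diam_lty : L1bounded C -> diam C < +oo.
Proof.
move=> [M CM]; apply: (@le_lt_trans _ _ (M + M)%:E); last exact: ltry.
apply: ge_ereal_sup => _ [a [b [Ca [Cb ->]]]].
have m0 : measurable_fun (@unit_itv R) (fun _ : R => 0 : R)%R by exact: measurable_cst.
apply: le_trans (L1dist_triangle (isL1_measurable (C_L1 _ Ca)) m0
  (isL1_measurable (C_L1 _ Cb))) _.
by rewrite EFinD leeD ?CM // L1distC CM.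
Qed.

End tau_closure.

Theorem mainTheorem1 (R : realType) (C : set (R -> R)) :
  (forall c, C c -> isL1 c) ->
  norm_closed C -> convexC C -> L1bounded C ->
  (hausdorff C (tau_closure C) <= diam C * (2^-1)%:E)%E /\
  ((0 < diam C)%E ->
   hausdorff C (tau_closure C) = (diam C * (2^-1)%:E)%E ->
   t_coef C = 2%:E).
Proof.
move=> C_L1 _ _ C_bounded; split; first exact: hausdorff_tau_closure_le.
move=> diam_gt0 H_half.
have diam_fin : diam C \is a fin_num.
  by rewrite fin_numElt (lt_trans _ diam_gt0) ?ltNy0 // L1bounded_diam_lty.
have CDr := esym (fineK diam_fin).
have Dr0 : (0 < fine (diam C))%R by rewrite -lte_fin -CDr.
apply/eqP; rewrite eq_le; apply/andP; split.
  by apply: ereal_inf_lbound; exists 2%R => //; exact: t_admissible2.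
apply: le_ereal_inf_tmp => _ [l adm <-]; rewrite lee_fin.
exact: t_admissible_ge2 Dr0 CDr H_half adm.
Qed.
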